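(* Let $q$ be a prime power, $N=\operatorname{SL}(2,q)$ and $G=\operatorname{GL}(2,q)$. Then $\operatorname{Ind}_N^G:\operatorname{R}(N)\to\operatorname{R}(G)$ is a monomorphism if and only if $q$ is a power of $2$, and $\operatorname{Ind}_N^G:\operatorname{RO}(N)\to\operatorname{RO}(G)$ is a monomorphism if and only if $q$ is a power of $2$ or $q\equiv 3 \pmod 4$.
   Context: $\operatorname{SL}(2,q)$ and $\operatorname{GL}(2,q)$ are the special and general linear groups of $2\times 2$ matrices over the field $\mathbb{F}_q$. $\operatorname{R}(K)$, $\operatorname{RO}(K)$ are the complex and real representation groups of $K$ (Grothendieck groups of $\mathbb{C}K$-, resp. $\mathbb{R}K$-modules). *)

From HB Require Import structures.
From mathcomp Require Import all_boot all_order all_algebra all_fingroup all_solvable all_field all_character.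
Set Implicit Arguments. Unset Strict Implicit. Unset Printing Implicit Defensive.
Import Order.TTheory GRing.Theory Num.Theory.
Local Open Scope ring_scope.
Local Open Scope group_scope.

Definition SL2set (F : finFieldType) : {set {'GL_2[F]}} :=
  [set g : {'GL_2[F]} | \det (GLval g) == 1%R].

Lemma SL2_group_set (F : finFieldType) : group_set (SL2set F).
Proof.
apply/group_setP; split; first by rewrite inE GL_1E det1.
move=> x y; rewrite !inE => /eqP dx /eqP dy.
by rewrite GL_ME det_mulmx dx dy mulr1.
Qed.

Canonical SL2 (F : finFieldType) : {group {'GL_2[F]}} := Group (SL2_group_set F).

(* R(K): the Grothendieck group of CK-modules, identified (via characters)
   with the virtual characters 'Z[irr K]. *)
Definition Rgroup (gT : finGroupType) (K : {group gT}) (phi : 'CF(K)) : Prop :=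
  phi \in 'Z[irr K].

Definition real_repr_char (gT : finGroupType) (K : {group gT}) (phi : 'CF(K)) : Prop :=
  exists (n : nat) (rG : mx_representation algC K n),
    (forall g, g \in K -> forall i j, (rG g i j) \is Num.real) /\ phi = cfRepr rG.

(* RO(K): the Grothendieck group of RK-modules, i.e. formal differences
   [V] - [W] of real representations, identified via characters with a
   subgroup of 'CF(K). *)
Definition ROgroup (gT : finGroupType) (K : {group gT}) (phi : 'CF(K)) : Prop :=
  exists chi1 chi2 : 'CF(K),
    [/\ real_repr_char chi1, real_repr_char chi2 & phi = chi1 - chi2].

Definition is_pow2 (q : nat) : Prop := exists k : nat, q = (2 ^ k)%N.

(* Since SL2 is normal in GL2, restricting an induced class function gives back
   |GL2 : SL2| times the function whenever the latter is GL2-invariant, so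
   induction is injective on any set of GL2-invariant class functions.
   Conversely Ind (theta ^ g) = Ind theta, so injectivity on a set stable under
   GL2-conjugation forces all its elements to be GL2-invariant.
   An element of GL2 whose determinant is a square acts on SL2 by conjugation
   like an element of SL2 (it is a scalar times an element of SL2); when q is
   even every determinant is a square.  When q = 3 mod 4 every determinant is
   plus or minus a square, and every x in SL2 is conjugated to x^-1 by a matrix
   of determinant -1, which suffices for the real-valued characters of RO.
   For odd q the unipotent matrices [[1,1],[0,1]] and [[1,a],[0,1]], a a
   non-square, are conjugate in GL2 but not in SL2, hence separated by an
   irreducible character; when q = 1 mod 4, -1 is a square, so [[1,a],[0,1]]
   is not SL2-conjugate to the inverse of [[1,1],[0,1]] either, and the real
   character chi + chi^* separates them. *)

From mathcomp Require Import all_boot all_order all_algebra all_fingroup all_solvable.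
From mathcomp Require Import all_field all_character.
From mathcomp Require Import zify ring.
Set Implicit Arguments. Unset Strict Implicit. Unset Printing Implicit Defensive.
Import GRing.Theory Num.Theory.
Local Open Scope ring_scope.

Section FinFieldSquares.

Variable F : finFieldType.
Local Notation q := #|F|.

Lemma expf_card_pred (a : F) : a != 0 -> a ^+ q.-1 = 1.
Proof.
move=> a0; apply: (mulIf a0); rewrite mul1r -exprSr prednK ?expf_card //.
exact: ltnW (finNzRing_gt1 F).
Qed.

Lemma pchar2_pow2_card : 2 \in [pchar F] -> is_pow2 q.
Proof. by move=> pchar2; exists (logn 2 #|pPrimeCharType pchar2|); apply: card_pprimeChar. Qed.

Lemma pow2_card_even : ~~ odd q -> is_pow2 q.
Proof.
move=> even_q; have [p p_pr pcharFp] := finPcharP F.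
have [p2 | odd_p] := even_prime p_pr; first by rewrite p2 in pcharFp; apply: pchar2_pow2_card.
by move: even_q; rewrite (card_pprimeChar pcharFp) oddX odd_p orbT.
Qed.

Lemma pow2_card_sqrt : is_pow2 q -> forall d : F, exists s, d = s ^+ 2.
Proof.
case=> [[|k] qE d]; first by have := finNzRing_gt1 F; rewrite qE.
by exists (d ^+ (2 ^ k)%N); rewrite -exprM -expnSr -qE expf_card.
Qed.

Lemma odd_card_oner_neqN1 : odd q -> 1 != - 1 :> F.
Proof.
move=> odd_q; apply: contraTneq odd_q => oneN1.
have [[|k] qE] : is_pow2 q by apply: pchar2_pow2_card; rewrite inE /= mulr2n {2}oneN1 subrr.
  by have := finNzRing_gt1 F; rewrite qE.
by rewrite qE oddX.
Qed.

Lemma odd_card_exists_half_N1 : odd q -> exists a : F, a ^+ (q.-1 %/ 2) = -1.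
Proof.
move=> odd_q; set m := (q.-1 %/ 2)%N.
have q_gt1 : (1 < q)%N := finNzRing_gt1 F; have q_mod2 : (q %% 2 = 1)%N by rewrite modn2 odd_q.
have qE : q.-1 = (m * 2)%N by rewrite /m; lia.
have m_gt0 : (0 < m)%N by rewrite /m -subn1; lia.
have [a /eqP | no_a] := pickP (fun a : F => a ^+ m == -1); first by exists a.
have roots : all (root ('X^m - 1)) (enum [pred a : F | a != 0]).
  apply/allP => a; rewrite mem_enum inE => a0; rewrite rootE !hornerE subr_eq0.
  have : (a ^+ m) ^+ 2 == 1 by rewrite -exprM -qE expf_card_pred.
  by rewrite sqrf_eq1 no_a orbF.
have := max_poly_roots (monic_neq0 (monicXnsubC 1 m_gt0)) roots (enum_uniq _).
by rewrite size_Xn_sub_1 // -cardE cardC1 -/q qE; lia.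
Qed.

Lemma half_N1_nonsquare (a s : F) : odd q -> a ^+ (q.-1 %/ 2) = -1 -> a != s ^+ 2.
Proof.
move=> odd_q aE; have oneN1 := odd_card_oner_neqN1 odd_q.
have q_gt1 : (1 < q)%N := finNzRing_gt1 F.
have q_mod2 : (q %% 2 = 1)%N by rewrite modn2 odd_q.
apply: contra_eqN aE => /eqP ->; rewrite -exprM (_ : (2 * _)%N = q.-1); last by lia.
have [-> | s0] := eqVneq s 0; last by rewrite expf_card_pred.
by rewrite expr0n eqn0Ngt ltn_predRL q_gt1 /= eq_sym oppr_eq0 oner_eq0.
Qed.

Lemma card1mod4_sqrtN1 : odd q -> (q %% 4 != 3)%N -> exists i : F, i ^+ 2 = -1.
Proof.
move=> odd_q q_mod4; have [a aE] := odd_card_exists_half_N1 odd_q.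
have q_mod2 : (q %% 2 = 1)%N by rewrite modn2 odd_q.
by exists (a ^+ (q %/ 4)); rewrite -exprM -aE; congr (_ ^+ _); lia.
Qed.

Lemma card3mod4_sq_or_Nsq (d : F) : (q %% 4 = 3)%N -> d != 0 ->
  exists s, d = s ^+ 2 \/ d = - s ^+ 2.
Proof.
move=> q_mod4 d0; set k := (q %/ 4)%N.
have qE : q.-1 = ((2 * k + 1) * 2)%N by rewrite /k; lia.
have dk : d * d ^+ (2 * k + 1) = (d ^+ k.+1) ^+ 2.
  by rewrite -exprS -exprM; congr (_ ^+ _); lia.
have : (d ^+ (2 * k + 1)) ^+ 2 == 1 by rewrite -exprM -qE expf_card_pred.
rewrite sqrf_eq1 => /orP[] /eqP dk1; exists (d ^+ k.+1); rewrite -dk dk1.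
  by left; rewrite mulr1.
by right; rewrite mulrN1 opprK.
Qed.

Lemma odd_card_exists_nonsquare : odd q -> exists2 a : F, a != 0 & forall s, a != s ^+ 2.
Proof.
move=> odd_q; have [a aE] := odd_card_exists_half_N1 odd_q.
exists a => [|s]; last exact: half_N1_nonsquare.
by have := half_N1_nonsquare 0 odd_q aE; rewrite expr0n.
Qed.

End FinFieldSquares.

Section InducedFromNormal.

Variables (gT : finGroupType) (G H : {group gT}).
Hypothesis nsHG : (H <| G)%g.

Lemma cfInd_inj_invariant (phi psi : 'CF(H)) :
  (G \subset 'I[phi])%g -> (G \subset 'I[psi])%g -> 'Ind[G] phi = 'Ind[G] psi -> phi = psi.
Proof.
move=> Iphi Ipsi /(congr1 'Res[H]); rewrite !cfRes_Ind_invariant //.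
by apply: scalerI; rewrite pnatr_eq0 -lt0n indexg_gt0.
Qed.

Lemma sub_inertia_valJ (phi : 'CF(H)) :
  (forall x y, x \in H -> y \in G -> phi (x ^ y)%g = phi x) -> (G \subset 'I[phi])%g.
Proof.
move=> phiJ; apply/subsetP => y Gy; have nHy := subsetP (normal_norm nsHG) y Gy.
by rewrite inE nHy; apply/eqP/cfun_inP => x Hx; rewrite cfConjgE // phiJ ?groupV.
Qed.

Lemma cfInd_inj_valJ (P : 'CF(H) -> Prop) (phi : 'CF(H)) y :
    (forall phi psi, P phi -> P psi -> 'Ind[G] phi = 'Ind[G] psi -> phi = psi) ->
    P phi -> P (phi ^ y)%CF -> y \in G ->
  forall x, phi (x ^ y)%g = phi x.
Proof.
move=> Ind_inj Pphi Pphiy Gy x; have nHy := subsetP (normal_norm nsHG) y Gy.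
have phiJ : (phi ^ y)%CF = phi.
  by apply: Ind_inj => //; apply/esym/cfclass_Ind/cfclassP => //; exists y.
by rewrite -{1}phiJ cfConjgEJ.
Qed.

End InducedFromNormal.

Lemma irr_conjC_mem_classes (gT : finGroupType) (G : {group gT}) x y :
    x \in G -> y \in G ->
    (forall i, 'chi[G]_i x + ('chi_i x)^* = 'chi_i y + ('chi_i y)^*) ->
  x \in (y ^: G)%g \/ x \in (y^-1 ^: G)%g.
Proof.
move=> Gx Gy chiE; pose c := #|'C_G[x]%g|%:R : algC.
have orth z : z \in G -> \sum_i 'chi[G]_i x * ('chi_i z + ('chi_i z)^*)^* =
                          c *+ (x \in z ^: G)%g + c *+ (x \in z^-1 ^: G)%g.
  move=> Gz; rewrite -!second_orthogonality_relation ?groupV // -big_split /=.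
  by apply: eq_bigr => i _; rewrite rmorphD /= mulrDr irr_inv.
have := orth y Gy; under eq_bigr => i _ do rewrite -chiE; rewrite orth // class_refl.
have [|not_xGy] := boolP (x \in y ^: G)%g; first by left.
have [|not_xGy'] := boolP (x \in y^-1 ^: G)%g; first by right.
move=> /eqP; rewrite /= !mulr0n mulr1n addr0 -[X in X + _]mulr1n -mulrnDr.
by rewrite mulrn_eq0 (negbTE (neq0CG _)).
Qed.

Section RealifyMatrix.

Variable C : numClosedFieldType.

Definition mxRe m n (A : 'M[C]_(m, n)) := map_mx (fun z => 'Re z) A.
Definition mxIm m n (A : 'M[C]_(m, n)) := map_mx (fun z => 'Im z) A.

Lemma mxReM m n p (A : 'M[C]_(m, n)) (B : 'M_(n, p)) :
  mxRe (A *m B) = mxRe A *m mxRe B - mxIm A *m mxIm B.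
Proof.
apply/matrixP => i j; rewrite !mxE raddf_sum /= -sumrB.
by apply: eq_bigr => k _; rewrite !mxE ReM.
Qed.

Lemma mxImM m n p (A : 'M[C]_(m, n)) (B : 'M_(n, p)) :
  mxIm (A *m B) = mxRe A *m mxIm B + mxIm A *m mxRe B.
Proof.
apply/matrixP => i j; rewrite !mxE raddf_sum /= -big_split.
by apply: eq_bigr => k _; rewrite !mxE ImM; congr (_ + _); apply: mulrC.
Qed.

(* The real 2n x 2n matrix of the R-linear map of C^n = R^n (+) i R^n given by A. *)
Definition realify_mx n (A : 'M[C]_n) : 'M[C]_(n + n) :=
  block_mx (mxRe A) (- mxIm A) (mxIm A) (mxRe A).

Lemma realify_mxM n (A B : 'M[C]_n) :
  realify_mx (A *m B) = realify_mx A *m realify_mx B.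
Proof.
rewrite /realify_mx mulmx_block mxReM mxImM !mulmxN !mulNmx opprD.
by rewrite [mxIm A *m mxRe B + _]addrC [- _ + mxRe A *m mxRe B]addrC.
Qed.

Lemma realify_mx1 n : realify_mx (1%:M : 'M[C]_n) = 1%:M.
Proof.
have Re1 : mxRe (1%:M : 'M[C]_n) = 1%:M.
  by apply/matrixP => i j; rewrite !mxE; apply/Creal_ReP; apply: rpred_nat.
have Im1 : mxIm (1%:M : 'M[C]_n) = 0.
  by apply/matrixP => i j; rewrite !mxE; apply/Creal_ImP; apply: rpred_nat.
by rewrite /realify_mx Re1 Im1 oppr0 scalar_mx_block.
Qed.

Lemma realify_mx_real n (A : 'M[C]_n) i j : realify_mx A i j \is Num.real.
Proof.
rewrite /realify_mx /block_mx /col_mx /row_mx mxE.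
by case: (split i) => k; rewrite mxE; case: (split j) => l; rewrite !mxE ?rpredN.
Qed.

Lemma mxtrace_realify n (A : 'M[C]_n) : \tr (realify_mx A) = \tr A + (\tr A)^*.
Proof.
rewrite /realify_mx mxtrace_block -mulr2n -mulr_natr.
have -> : \tr (mxRe A) = 'Re (\tr A).
  by rewrite /mxtrace raddf_sum; apply: eq_bigr => i _; rewrite mxE.
by rewrite ReE divfK // pnatr_eq0.
Qed.

End RealifyMatrix.

Section RealCharacters.

Variables (gT : finGroupType) (K : {group gT}).

Lemma realify_mx_repr n (rG : mx_representation algC K n) :
  mx_repr K (fun g => realify_mx (rG g)).
Proof.
split; first by rewrite repr_mx1 realify_mx1.
by move=> x y Kx Ky; rewrite repr_mxM // realify_mxM.
Qed.

Lemma real_repr_char_cfRepr_conjC n (rG : mx_representation algC K n) :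
  real_repr_char (cfRepr rG + (cfRepr rG)^*%CF).
Proof.
exists (n + n)%N, (MxRepresentation (realify_mx_repr rG)).
split=> [g _ i j | ]; first exact: realify_mx_real.
apply/cfunP => g; rewrite !cfunE /= mxtrace_realify.
by case: (g \in K); rewrite ?mulr1n ?mulr0n ?rmorph0 ?addr0.
Qed.

Lemma real_repr_char0 : real_repr_char (0 : 'CF(K)).
Proof.
have r0 : mx_repr K (fun _ => (1%:M : 'M[algC]_0)).
  by split=> // x y _ _; rewrite mul1mx.
exists 0%N, (MxRepresentation r0); split=> [g _ [] // | ].
by apply/cfunP => g; rewrite !cfunE /mxtrace big_ord0 mul0rn.
Qed.

Lemma ROgroup_irr_conjC i : ROgroup ('chi[K]_i + ('chi_i)^*%CF).
Proof.
exists ('chi_i + ('chi_i)^*%CF), 0; split; rewrite ?subr0 //; last exact: real_repr_char0.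
by have := real_repr_char_cfRepr_conjC 'Chi_i; rewrite irrRepr.
Qed.

Lemma real_repr_charV (chi : 'CF(K)) x : real_repr_char chi -> chi (x^-1)%g = chi x.
Proof.
case=> n [rG [rG_real ->]]; rewrite char_inv ?cfRepr_char //.
apply: conj_Creal; rewrite cfunE; case Kx: (x \in K); rewrite ?mulr0n //.
by rewrite mulr1n; apply: rpred_sum => i _; apply: rG_real.
Qed.

Lemma ROgroupV (phi : 'CF(K)) x : ROgroup phi -> phi (x^-1)%g = phi x.
Proof. by case=> chi1 [chi2 [Rchi1 Rchi2 ->]]; rewrite !cfunE !real_repr_charV. Qed.

End RealCharacters.

Section Matrix2.

Variable R : comNzRingType.

Definition mx2 (a b c d : R) : 'M[R]_2 :=
  \matrix_(i, j) if (i : nat) == 0%N then (if (j : nat) == 0%N then a else b)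
                 else (if (j : nat) == 0%N then c else d).

Lemma mx2_eta (A : 'M[R]_2) : A = mx2 (A 0 0) (A 0 1) (A 1 0) (A 1 1).
Proof.
apply/matrixP => i j; rewrite !mxE.
by case: i => [[|[|i]] ?]; case: j => [[|[|j]] ?] //=; congr (A _ _); apply/val_inj.
Qed.

Lemma mul_mx2 (a b c d a' b' c' d' : R) :
  mx2 a b c d *m mx2 a' b' c' d' =
  mx2 (a * a' + b * c') (a * b' + b * d') (c * a' + d * c') (c * b' + d * d').
Proof.
apply/matrixP => i j; rewrite !mxE !big_ord_recl big_ord0 !mxE /= addr0.
by case: i => [[|[|i]] ?]; case: j => [[|[|j]] ?].
Qed.

Lemma mx2_inj (a b c d a' b' c' d' : R) :
  mx2 a b c d = mx2 a' b' c' d' -> [/\ a = a', b = b', c = c' & d = d'].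
Proof.
move=> eq_mx; have e i j := congr1 (fun A : 'M[R]_2 => A i j) eq_mx.
by move: (e 0 0) (e 0 1) (e 1 0) (e 1 1); rewrite !mxE.
Qed.

Lemma det_mx2 (a b c d : R) : \det (mx2 a b c d) = a * d - b * c.
Proof.
rewrite (expand_det_row _ 0) !big_ord_recl big_ord0 addr0 /cofactor !det_mx11 !mxE /=.
by rewrite expr0 expr1 !mul1r mulN1r mulrN.
Qed.

Lemma scalar_mx2 (s : R) : s%:M = mx2 s 0 0 s.
Proof. by apply/matrixP => i j; rewrite !mxE; case: i => [[|[|i]] ?]; case: j => [[|[|j]] ?]. Qed.

End Matrix2.

Section GL2.

Variable F : finFieldType.

Lemma det_neq0_unit (A : 'M[F]_2) : \det A != 0 -> A \is a GRing.unit.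
Proof. by move=> dA; rewrite -[_ \is a _]/(A \in unitmx) unitmxE unitfE. Qed.

Definition mkGL (A : 'M[F]_2) (dA : \det A != 0) : {'GL_2[F]} := Sub A (det_neq0_unit dA).

Lemma mkGLE (A : 'M[F]_2) (dA : \det A != 0) : GLval (mkGL dA) = A.
Proof. by []. Qed.

Lemma det_GLM (u v : {'GL_2[F]}) : \det (GLval (u * v)%g) = \det (GLval u) * \det (GLval v).
Proof. by rewrite GL_MxE det_mulmx. Qed.

Lemma det_GLV (u : {'GL_2[F]}) : \det (GLval u^-1%g) = (\det (GLval u))^-1.
Proof. by rewrite GL_VxE det_inv. Qed.

Lemma conjg_GL (u v w : {'GL_2[F]}) :
  (u ^ v)%g = w <-> GLval u *m GLval v = GLval v *m GLval w.
Proof.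
rewrite -!GL_MxE; split=> [<- | /val_inj eq_uv]; first by rewrite -conjgC.
by rewrite conjgE eq_uv mulKg.
Qed.

Lemma SL2E (u : {'GL_2[F]}) : (u \in SL2 F) = (\det (GLval u) == 1).
Proof. by rewrite inE. Qed.

Lemma SL2_normal : (SL2 F <| 'GL_2[F])%g.
Proof.
rewrite /normal subsetT; apply/subsetP => y _; rewrite inE; apply/subsetP => x.
by rewrite mem_conjg !SL2E conjgE invgK !det_GLM det_GLV mulrC divfK ?GL_det.
Qed.

Lemma conjg_scalar_GL (s : F) : s != 0 ->
  exists z : {'GL_2[F]}, GLval z = s%:M /\ forall x, (x ^ z)%g = x.
Proof.
move=> s0; have dz : \det (s%:M : 'M[F]_2) != 0 by rewrite det_scalar expf_neq0.
by exists (mkGL dz); split=> // x; apply/conjg_GL; rewrite mkGLE scalar_mxC.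
Qed.

(* Modulo the centre, an element whose determinant is a square lies in SL2. *)
Lemma SL2_conj_det_sq (y : {'GL_2[F]}) s : \det (GLval y) = s ^+ 2 ->
  exists2 n, n \in SL2 F & forall x, (x ^ y = x ^ n)%g.
Proof.
move=> dy; have s0 : s != 0 by apply: contraTneq (GL_det y) => s0; rewrite dy s0 expr0n eqxx.
have [z [zE zJ]] := conjg_scalar_GL s0; exists (z^-1 * y)%g.
  by rewrite SL2E det_GLM det_GLV zE det_scalar dy mulVf ?expf_neq0.
by move=> x; rewrite -{1}(mulKVg z y) conjgM zJ.
Qed.

Lemma GLV_mx2 (x : {'GL_2[F]}) a b c d :
  GLval x = mx2 a b c d -> a * d - b * c = 1 -> GLval x^-1%g = mx2 d (-b) (-c) a.
Proof.
move=> xE dx; have xM : GLval x *m mx2 d (-b) (-c) a = 1%:M.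
  by rewrite xE mul_mx2 scalar_mx2 -dx; congr mx2; ring.
by rewrite -[LHS]mulmx1 -xM mulmxA -GL_MxE mulVg GL_1E mul1mx.
Qed.

Lemma SL2_conj_inv (x : {'GL_2[F]}) : x \in SL2 F ->
  exists h : {'GL_2[F]}, \det (GLval h) = -1 /\ (x ^ h = x^-1)%g.
Proof.
rewrite SL2E => /eqP dx; have xE := mx2_eta (GLval x).
set a := GLval x 0 0 in xE; set b := GLval x 0 1 in xE; set c := GLval x 1 0 in xE.
set d := GLval x 1 1 in xE; rewrite xE det_mx2 in dx.
suff [H [dH xH]] : exists H, \det H = -1 /\ mx2 a b c d *m H = H *m mx2 d (-b) (-c) a.
  have dH0 : \det H != 0 by rewrite dH oppr_eq0 oner_eq0.
  by exists (mkGL dH0); split=> //; apply/conjg_GL; rewrite mkGLE (GLV_mx2 xE dx) xE.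
have [b0 | b0] := eqVneq b 0; last first.
  exists (mx2 1 0 ((d - a) / b) (-1)); rewrite det_mx2 !mul_mx2.
  by split; [ring | congr mx2; field].
have [c0 | c0] := eqVneq c 0; last first.
  exists (mx2 1 ((d - a) / c) 0 (-1)); rewrite det_mx2 !mul_mx2 b0.
  by split; [ring | congr mx2; field].
exists (mx2 0 1 1 0); rewrite det_mx2 !mul_mx2 b0 c0.
by split; [ring | congr mx2; ring].
Qed.

Lemma SL2_conj_det_Nsq (x y : {'GL_2[F]}) s : x \in SL2 F -> \det (GLval y) = - s ^+ 2 ->
  exists2 n, n \in SL2 F & (x ^ y = x^-1 ^ n)%g.
Proof.
move=> Nx dy; have [h [dh xh]] := SL2_conj_inv Nx.
have [n Nn yE] : exists2 n, n \in SL2 F & forall x, (x ^ (h^-1 * y) = x ^ n)%g.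
  by apply: (@SL2_conj_det_sq _ s); rewrite det_GLM det_GLV dh dy invrN invr1 mulN1r opprK.
by exists n => //; rewrite -yE -xh -conjgM mulKVg.
Qed.

Lemma det_unip (b : F) : \det (mx2 1 b 0 1) != 0.
Proof. by rewrite det_mx2 mulr1 mulr0 subr0 oner_neq0. Qed.

Definition unip (b : F) : {'GL_2[F]} := mkGL (det_unip b).

Lemma unip_SL2 (b : F) : unip b \in SL2 F.
Proof. by rewrite SL2E /unip mkGLE det_mx2 mulr1 mulr0 subr0. Qed.

Lemma unipV (b : F) : (unip b)^-1%g = unip (- b).
Proof.
apply: val_inj; change (GLval (unip b)^-1%g = mx2 1 (- b) 0 1).
by rewrite (@GLV_mx2 _ 1 b 0 1) ?oppr0 // mulr1 mulr0 subr0.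
Qed.

(* Under [%g] a bare [1 : F] would be the unit of the additive group of F, i.e. 0. *)
Lemma unip_conj_diag (a : F) : a != 0 -> exists g, (unip 1%R ^ g = unip a)%g.
Proof.
move=> a0; have dg : \det (mx2 1 0 0 a) != 0 by rewrite det_mx2 mul1r mulr0 subr0.
by exists (mkGL dg); apply/conjg_GL; rewrite /unip !mkGLE !mul_mx2; congr mx2; ring.
Qed.

Lemma unip_SL2_conj (b b' : F) : b' != 0 ->
  unip b \in (unip b' ^: SL2 F)%g -> exists t, b = b' * t ^+ 2.
Proof.
move=> b0 /imsetP[n Nn /esym/conjg_GL]; have nE := mx2_eta (GLval n).
set p := GLval n 0 0 in nE; set r := GLval n 0 1 in nE.
set s := GLval n 1 0 in nE; set t := GLval n 1 1 in nE.
move: Nn; rewrite SL2E /unip !mkGLE nE det_mx2 !mul_mx2 => /eqP dn /mx2_inj[e1 e2 _ _].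
have /eqP : b' * s = 0 by apply: (addrI (1 * p)); rewrite e1; ring.
rewrite mulf_eq0 (negbTE b0) /= => /eqP s0.
have bt : b' * t = p * b by apply: (addrI (1 * r)); rewrite e2; ring.
exists t; rewrite -[LHS]mulr1 -[X in b * X]dn s0 expr2 mulrA bt; ring.
Qed.

End GL2.

Section InductionSL2GL2.

Variable F : finFieldType.
Local Notation q := #|F|.

Lemma GL2_sub_inertia_pow2 (phi : 'CF(SL2 F)) : is_pow2 q -> ('GL_2[F] \subset 'I[phi])%g.
Proof.
move=> pow2_q; apply: (sub_inertia_valJ (SL2_normal F)) => x y Nx _.
have [s ds] := pow2_card_sqrt pow2_q (\det (GLval y)).
by have [n Nn ->] := SL2_conj_det_sq ds; rewrite cfunJ.
Qed.

Lemma GL2_sub_inertia_real (phi : 'CF(SL2 F)) :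
  (q %% 4 = 3)%N -> (forall x, phi x^-1%g = phi x) -> ('GL_2[F] \subset 'I[phi])%g.
Proof.
move=> q_mod4 phiV; apply: (sub_inertia_valJ (SL2_normal F)) => x y Nx _.
have [s [ds | ds]] := card3mod4_sq_or_Nsq q_mod4 (GL_det y).
  by have [n Nn ->] := SL2_conj_det_sq ds; rewrite cfunJ.
by have [n Nn ->] := SL2_conj_det_Nsq Nx ds; rewrite cfunJ ?groupV ?phiV.
Qed.

Lemma pow2_card_of_cfInd_inj :
    (forall phi psi : 'CF(SL2 F), Rgroup phi -> Rgroup psi ->
       'Ind['GL_2[F]] phi = 'Ind['GL_2[F]] psi -> phi = psi) ->
  is_pow2 q.
Proof.
move=> Ind_inj; have [odd_q | ] := boolP (odd q); last exact: pow2_card_even.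
have [a a0 a_nsq] := odd_card_exists_nonsquare odd_q.
have [g ga] := unip_conj_diag a0.
have : unip a \in (unip 1%R ^: SL2 F)%g.
  apply/eq_irr_mem_classP => [|i]; first exact: unip_SL2.
  rewrite -ga; apply: (cfInd_inj_valJ (SL2_normal F) Ind_inj); rewrite ?inE //.
    exact: irr_vchar.
  by rewrite -conjg_IirrE; apply: irr_vchar.
by case/(unip_SL2_conj (oner_neq0 _)) => t /eqP; rewrite mul1r (negbTE (a_nsq t)).
Qed.

Lemma pow2_or_card3mod4_of_cfInd_inj :
    (forall phi psi : 'CF(SL2 F), ROgroup phi -> ROgroup psi ->
       'Ind['GL_2[F]] phi = 'Ind['GL_2[F]] psi -> phi = psi) ->
  is_pow2 q \/ (q %% 4 = 3)%N.
Proof.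
move=> Ind_inj; have [odd_q | ] := boolP (odd q); last by left; apply: pow2_card_even.
have [q_mod4 | q_mod4] := eqVneq (q %% 4)%N 3; first by right.
have [i iE] := card1mod4_sqrtN1 odd_q q_mod4.
have [a a0 a_nsq] := odd_card_exists_nonsquare odd_q.
have [g ga] := unip_conj_diag a0.
have [] := @irr_conjC_mem_classes _ _ (unip a) (unip 1%R) (unip_SL2 a) (unip_SL2 1%R).
- move=> j; set phi := 'chi_j + ('chi_j)^*%CF.
  have phiE x : phi x = 'chi_j x + ('chi_j x)^* by rewrite !cfunE.
  rewrite -!phiE -ga; apply: (cfInd_inj_valJ (SL2_normal F) Ind_inj); rewrite ?inE //.
    exact: ROgroup_irr_conjC.
  by rewrite rmorphD /= -conj_cfConjg -conjg_IirrE; apply: ROgroup_irr_conjC.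
- by case/(unip_SL2_conj (oner_neq0 _)) => t /eqP; rewrite mul1r (negbTE (a_nsq t)).
have N1_neq0 : -1 != 0 :> F by rewrite oppr_eq0 oner_eq0.
rewrite unipV => /(unip_SL2_conj N1_neq0)[t].
by rewrite -iE -exprMn => /eqP; rewrite (negbTE (a_nsq _)).
Qed.

End InductionSL2GL2.

Theorem mainTheorem6 (F : finFieldType) :
  ((forall phi psi : 'CF(SL2 F),
      Rgroup phi -> Rgroup psi ->
      ('Ind['GL_2[F]] phi = 'Ind['GL_2[F]] psi)%R -> phi = psi)
   <-> is_pow2 #|F|)
  /\
  ((forall phi psi : 'CF(SL2 F),
      ROgroup phi -> ROgroup psi ->
      ('Ind['GL_2[F]] phi = 'Ind['GL_2[F]] psi)%R -> phi = psi)
   <-> (is_pow2 #|F| \/ (#|F| %% 4 = 3)%N)).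
Proof.
have Ind_inj := cfInd_inj_invariant (SL2_normal F).
split; split.
- exact: pow2_card_of_cfInd_inj.
- by move=> pow2_q phi psi _ _; apply: Ind_inj; apply: GL2_sub_inertia_pow2.
- exact: pow2_or_card3mod4_of_cfInd_inj.
case=> [pow2_q | q_mod4] phi psi ROphi ROpsi; apply: Ind_inj;
  by [apply: GL2_sub_inertia_pow2 | apply: GL2_sub_inertia_real => // x; apply: ROgroupV].
Qed.
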